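(* A topological space $X$ is openly irresolvable if and only if the formula $\Diamond^*(\Box^*\varphi\lor\Box^*\neg\varphi)$ is $d$-valid in $X$ for every modal formula $\varphi$.
   Context: $\Diamond^*\psi$ abbreviates $\psi\lor\Diamond\psi$ and $\Box^*\psi$ abbreviates $\psi\land\Box\psi$. $d$-semantics: a model on a space $X$ is a valuation of propositional variables by subsets of $X$; truth sets $\mathcal{M}_d(\varphi)$ interpret Boolean connectives as set operations, $\mathcal{M}_d(\Diamond\varphi)=\mathrm{d}_X(\mathcal{M}_d(\varphi))$ where $\mathrm{d}_XY$ is the set of limit points of $Y$ ($x$ such that every $O-\{x\}$, $O$ an open neighbourhood of $x$, meets $Y$), and $\Box=\neg\Diamond\neg$. A formula is $d$-valid in $X$ if its truth set is $X$ in every model on $X$. A space is resolvable if it has two disjoint non-empty dense subsets, irresolvable otherwise; $X$ is openly irresolvable if every non-empty open subspace of $X$ is irresolvable. *)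

From HB Require Import structures.
From mathcomp Require Import all_boot all_classical topology.
Set Implicit Arguments. Unset Strict Implicit. Unset Printing Implicit Defensive.
Local Open Scope classical_set_scope.

Inductive form : Type :=
  | Var : nat -> form
  | Bot : form
  | Neg : form -> form
  | And : form -> form -> form
  | Or  : form -> form -> form
  | Imp : form -> form -> form
  | Dia : form -> form.

Definition Box (p : form) : form := Neg (Dia (Neg p)).
Definition DiaS (p : form) : form := Or p (Dia p).
Definition BoxS (p : form) : form := And p (Box p).

Definition dset (X : topologicalType) (Y : set X) : set X :=
  [set x | forall O : set X, open O -> O x -> exists y, O y /\ y <> x /\ Y y].

Fixpoint truth (X : topologicalType) (v : nat -> set X) (p : form) : set X :=
  match p with
  | Var n => v n
  | Bot => set0
  | Neg q => ~` truth v q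
  | And q r => truth v q `&` truth v r
  | Or q r => truth v q `|` truth v r
  | Imp q r => ~` truth v q `|` truth v r
  | Dia q => dset (truth v q)
  end.

Definition d_valid (X : topologicalType) (p : form) : Prop :=
  forall v : nat -> set X, truth v p = setT.

(* A is dense in the subspace U (subspace topology: open sets are U `&` O, O open) *)
Definition dense_in (X : topologicalType) (U A : set X) : Prop :=
  A `<=` U /\ forall O : set X, open O -> U `&` O !=set0 -> A `&` O !=set0.

Definition resolvable_sub (X : topologicalType) (U : set X) : Prop :=
  exists A B : set X, dense_in U A /\ dense_in U B /\ A `&` B = set0
                      /\ A !=set0 /\ B !=set0.

Definition resolvable (X : topologicalType) : Prop := resolvable_sub (@setT X).

Definition openly_irresolvable (X : topologicalType) : Prop :=
  forall U : set X, open U -> U !=set0 -> ~ resolvable_sub U.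

(* Under d-semantics Box* is interior and Diamond* is closure, so the formula
   is d-valid exactly when A° `|` (~` A)° is dense for every A.  A non-empty
   open set U missing A° `|` (~` A)° is resolved by U `&` A and U `&` ~` A;
   conversely, disjoint dense subsets A, B of U force U to miss both A° (which
   B meets wherever it meets U) and (~` A)° (which A meets likewise). *)
From mathcomp Require Import all_boot all_classical topology.
Set Implicit Arguments.
Unset Strict Implicit.
Unset Printing Implicit Defensive.
Local Open Scope classical_set_scope.

Section DSemantics.
Context {X : topologicalType}.
Implicit Types (Y : set X) (v : nat -> set X) (p : form).

Lemma dsetE Y : dset Y = limit_point Y.
Proof.
apply/seteqP; split => x dYx.
- move=> U; rewrite nbhsE => -[O [oO Ox] OU].
  have [y [Oy [yx Yy]]] := dYx O oO Ox.
  by exists y; split => //; [exact/eqP | exact: OU].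
- move=> O oO Ox; have [y [/eqP yx Yy Oy]] := dYx O (open_nbhs_nbhs (conj oO Ox)).
  by exists y.
Qed.

Lemma setU_dset Y : Y `|` dset Y = closure Y.
Proof.
rewrite dsetE; apply/seteqP; split => [x [/subset_closure|/subset_limit_point]//|x].
by rewrite closure_isolated_limit_point => -[/isolatedS|]; [left|right].
Qed.

Lemma truth_DiaS v p : truth v (DiaS p) = closure (truth v p).
Proof. exact: setU_dset. Qed.

Lemma truth_BoxS v p : truth v (BoxS p) = (truth v p)°.
Proof. by rewrite -[in RHS](setCK (truth v p)) interiorC -setU_dset setCU setCK. Qed.

Lemma truth_DiaS_BoxS_or_BoxS_Neg v p :
  truth v (DiaS (Or (BoxS p) (BoxS (Neg p)))) =
  closure ((truth v p)° `|` (~` truth v p)°).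
Proof.
rewrite truth_DiaS.
have -> : truth v (Or (BoxS p) (BoxS (Neg p))) =
          truth v (BoxS p) `|` truth v (BoxS (Neg p)) by [].
by rewrite !truth_BoxS.
Qed.

Lemma d_valid_DiaS_BoxS_or_BoxS_NegP :
  (forall p, d_valid X (DiaS (Or (BoxS p) (BoxS (Neg p))))) <->
  (forall A : set X, closure (A° `|` (~` A)°) = setT).
Proof.
split => [valid A | dense_AC p v]; last by rewrite truth_DiaS_BoxS_or_BoxS_Neg.
by have := valid (Var 0) (fun=> A); rewrite truth_DiaS_BoxS_or_BoxS_Neg.
Qed.

End DSemantics.

Section Resolvability.
Context {X : topologicalType}.
Implicit Types U A B S : set X.

Lemma dense_in_neq0 U S : dense_in U S -> U !=set0 -> S !=set0.
Proof.
move=> [_ dS] [x Ux]; have [|y [Sy _]] := dS setT openT; first by exists x.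
by exists y.
Qed.

Lemma dense_in_setI U S : open U -> U `&` (~` S)° = set0 -> dense_in U (U `&` S).
Proof.
move=> oU US0; split => [y []//|O oO [z [Uz Oz]]]; apply: contrapT => USO0.
have : U `&` O `<=` ~` S by move=> y [Uy Oy] Sy; apply: USO0; exists y.
rewrite open_subsetE; last exact: openI.
move=> /(_ z (conj Uz Oz)) nSz.
have USz : (U `&` (~` S)°) z by [].
by rewrite US0 in USz.
Qed.

Lemma dense_in_disjoint_interior U A B :
  dense_in U A -> dense_in U B -> A `&` B = set0 -> U `&` (A° `|` (~` A)°) = set0.
Proof.
move=> [_ dA] [_ dB] AB0; apply/seteqP; split => // z [Uz].
case; rewrite /interior nbhsE => -[W [oW Wz] WS].
- have [|y [By Wy]] := dB W oW; first by exists z.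
  have ABy : (A `&` B) y by split => //; exact: WS.
  by rewrite AB0 in ABy.
- have [|y [Ay Wy]] := dA W oW; first by exists z.
  exact: WS _ Wy Ay.
Qed.

Lemma openly_irresolvableP :
  openly_irresolvable X <-> forall A, closure (A° `|` (~` A)°) = setT.
Proof.
split => [oi A | dense_AC U oU [x Ux] [A [B [dA [dB [AB0 _]]]]]].
- apply/seteqP; split => // x _; apply: contrapT => nclx.
  set I := A° `|` (~` A)° in nclx.
  have Ux : (~` I)° x by rewrite interiorC.
  set U := (~` I)° in Ux.
  have oU : open U by exact: open_interior.
  have U0 S : (~` S)° `<=` I -> U `&` (~` S)° = set0.
    by move=> SI; apply/seteqP; split => // y [/interior_subset nIy /SI].
  have dUA : dense_in U (U `&` A).
    by apply: dense_in_setI => //; apply: U0 => y; right.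
  have dUAC : dense_in U (U `&` ~` A).
    by apply: dense_in_setI => //; apply: U0; rewrite setCK => y; left.
  apply: (oi U oU); first by exists x.
  exists (U `&` A), (U `&` ~` A); do 2!split => //; split.
    by rewrite setIACA setICr setI0.
  by split; apply: dense_in_neq0 (ex_intro _ x Ux).
- have : closure (A° `|` (~` A)°) x by rewrite dense_AC.
  move=> /(_ U (open_nbhs_nbhs (conj oU Ux))) [y [Iy Uy]].
  have UIy : (U `&` (A° `|` (~` A)°)) y by [].
  by rewrite (dense_in_disjoint_interior dA dB AB0) in UIy.
Qed.

End Resolvability.

Theorem lemma7 (X : topologicalType) :
  openly_irresolvable X <->
  (forall phi : form, d_valid X (DiaS (Or (BoxS phi) (BoxS (Neg phi))))).
Proof.
exact: iff_trans openly_irresolvableP (iff_sym d_valid_DiaS_BoxS_or_BoxS_NegP).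
Qed.
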